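(* Let $S$ be a powerful set with ground set $E$. For every $e\in E$, both the contraction $S/e$ and the deletion $S\setminus e$ are powerful multisets.
   Context: A set $S\subseteq 2^E$ is powerful if for every $X\subseteq E$ the number of members of $S$ contained in $X$ is a power of 2; view it as a multiset with $\{0,1\}$-valued indicator function $f$. For a multiset over $E$ with indicator function $f$ (multiplicities), assuming $f(\emptyset)\ne0$, it is a powerful multiset if $\log_2\Big(\sum_{Y\subseteq E} f(Y)\big/\sum_{Y\subseteq E\setminus X} f(Y)\Big)$ is an integer for all $X\subseteq E$. For $e\in E$, the contraction $S/e$ is the multiset over $E\setminus\{e\}$ with indicator function $(f/e)(X)=f(X)$, and the deletion $S\setminus e$ is the multiset over $E\setminus\{e\}$ with indicator function $(f\setminus e)(X)=f(X)+f(X\cup\{e\})$, for $X\subseteq E\setminus\{e\}$. *)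

From mathcomp Require Import all_boot all_order all_algebra.
Set Implicit Arguments. Unset Strict Implicit. Unset Printing Implicit Defensive.
Import Order.TTheory GRing.Theory Num.Theory.

Definition powerful_set (E : finType) (S : {set {set E}}) : Prop :=
  forall X : {set E}, exists k : nat, #|[set Y in S | Y \subset X]| = 2 ^ k.

(* A multiset over a ground set D ⊆ T is given by its multiplicity function
   f : {set T} -> nat; only the values on subsets of D matter. *)
Definition indicator (E : finType) (S : {set {set E}}) : {set E} -> nat :=
  fun Y => nat_of_bool (Y \in S).

Definition powerful_multiset (T : finType) (D : {set T}) (f : {set T} -> nat)
  : Prop :=
  f set0 <> 0%N /\
  forall X : {set T}, X \subset D ->
    exists k : int,
      (((\sum_(Y : {set T} | Y \subset D) f Y)%:R
        / (\sum_(Y : {set T} | Y \subset D :\: X) f Y)%:R : rat)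
       = (2%:R : rat) ^ k)%R.

Definition contraction (T : finType) (f : {set T} -> nat) (e : T)
  : {set T} -> nat := fun X => f X.

Definition deletion (T : finType) (f : {set T} -> nat) (e : T)
  : {set T} -> nat := fun X => (f X + f (e |: X))%N.

From mathcomp Require Import all_boot all_order all_algebra.
Set Implicit Arguments. Unset Strict Implicit. Unset Printing Implicit Defensive.
Import GRing.Theory.

(* Every sum of the multiplicities of S/e or of S\e over the subsets of some
   B ⊆ E - e counts the members of S inside B (resp. inside B + e, by pairing
   Y with Y + e), hence is a power of two; a ratio of two powers of two is a
   power of two with an integer exponent. *)

Lemma sum_indicator_subset (T : finType) (S : {set {set T}}) (A : {set T}) :
  (\sum_(Y : {set T} | Y \subset A) indicator S Y)%N
  = #|[set Y in S | Y \subset A]|.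
Proof.
rewrite -sum1_card (eq_bigl (fun Y => (Y \in S) && (Y \subset A))).
  rewrite big_mkcondl; apply: eq_bigr => Y _.
  by rewrite /indicator; case: (Y \in S).
by move=> Y; rewrite !inE.
Qed.

Lemma sum_deletion_subset (T : finType) (f : {set T} -> nat) (e : T)
    (A : {set T}) :
  e \notin A ->
  (\sum_(Y : {set T} | Y \subset A) deletion f e Y)%N
  = (\sum_(Y : {set T} | Y \subset e |: A) f Y)%N.
Proof.
move=> eNA; rewrite big_split /= [X in _ = X](bigID (fun Y : {set T} => e \in Y)).
rewrite /= addnC; congr (_ + _)%N; last first.
  by apply: eq_bigl => Y; rewrite -subsetD1 setU1K.
rewrite [X in _ = X](reindex_onto (fun Y => e |: Y) (fun Y => Y :\ e)) /=; last first.
  by move=> Y /andP[_ eY]; rewrite setD1K.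
apply: eq_bigl => Y; rewrite setU11 andbT.
apply/idP/andP => [YA | [eYA /eqP <-]].
  have eNY : e \notin Y by apply: contra eNA; apply: (subsetP YA).
  by rewrite setU1K // setUS.
by rewrite -(setU1K eNA) setSD.
Qed.

Lemma powers2_ratio (a b : nat) :
  ((2 ^ a)%N%:R / (2 ^ b)%N%:R = (2%:R : rat) ^ (a%:Z - b%:Z))%R.
Proof. by rewrite expfzDr // -invr_expz !natrX. Qed.

Lemma powerful_multiset_pow2_sums (T : finType) (D : {set T})
    (f : {set T} -> nat) :
  f set0 <> 0%N ->
  (forall B : {set T}, B \subset D ->
     exists k, (\sum_(Y : {set T} | Y \subset B) f Y)%N = 2 ^ k) ->
  powerful_multiset D f.
Proof.
move=> f0 pow2; split=> // X _.
have [a ->] := pow2 D (subxx D); have [b ->] := pow2 _ (subsetDl D X).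
by exists (a%:Z - b%:Z)%R; apply: powers2_ratio.
Qed.

Lemma powerful_set_set0 (E : finType) (S : {set {set E}}) :
  powerful_set S -> set0 \in S.
Proof.
move=> PS; have [k Hk] := PS set0.
have : 0 < #|[set Y in S | Y \subset set0]| by rewrite Hk expn_gt0.
by case/card_gt0P => Y; rewrite !inE subset0 => /andP[YS /eqP <-].
Qed.

Theorem corollary1 (E : finType) (S : {set {set E}}) (e : E) :
  powerful_set S ->
  powerful_multiset ([set: E] :\ e) (contraction (indicator S) e) /\
  powerful_multiset ([set: E] :\ e) (deletion (indicator S) e).
Proof.
move=> PS; have S0 := powerful_set_set0 PS.
split; apply: powerful_multiset_pow2_sums.
- by rewrite /contraction /indicator S0.
- by move=> B _; rewrite sum_indicator_subset; apply: PS.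
- by rewrite /deletion /indicator S0.
- move=> B BsubD; have eNB : e \notin B.
    by apply/negP => /(subsetP BsubD); rewrite !inE eqxx.
  by rewrite sum_deletion_subset // sum_indicator_subset; apply: PS.
Qed.
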